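(* There exist absolute positive constants $c,C$ such that the following holds. Let $n>10$ be an integer, $0<p<1/2$, and let $\varepsilon_1,\dots,\varepsilon_n$ be i.i.d. Bernoulli$(p)$ random variables, extended periodically by $\varepsilon_{j+n}=\varepsilon_j$. For integers $i$ let $X_i=\varepsilon_i\varepsilon_{i+1}$ (so $X_{i+n}=X_i$), and $W=\sum_{i=1}^nX_i$. Then for every positive integer $w\le cnp$ with $P(W=w)>0$, $$\sum_{i=1}^n\sum_{j\in\{i-1,i+1\}}E(X_iX_j\mid W=w)\le \frac{C}{np}\,w^2 .$$ *)

From HB Require Import structures.
From mathcomp Require Import all_boot all_order all_algebra.
Set Implicit Arguments. Unset Strict Implicit. Unset Printing Implicit Defensive.
Import Order.TTheory GRing.Theory Num.Theory.
Local Open Scope ring_scope.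

(* A configuration (eps_1,...,eps_n) in {0,1}^n, indexed cyclically by 'I_n
   (index i stands for i+1; successor ordS / predecessor ord_pred are mod n). *)
Definition config n := {ffun 'I_n -> bool}.

Definition Xi n (e : config n) (i : 'I_n) : nat := (e i && e (ordS i) : nat).

Definition Wsum n (e : config n) : nat := (\sum_(i < n) Xi e i)%N.

Definition weight (R : realFieldType) n (p : R) (e : config n) : R :=
  p ^+ #|[set i | e i]| * (1 - p) ^+ (n - #|[set i | e i]|).

Definition probW (R : realFieldType) n (p : R) (w : nat) : R :=
  \sum_(e : config n | Wsum e == w) weight p e.

Definition condE (R : realFieldType) n (p : R) (Y : config n -> R) (w : nat) : R :=
  (\sum_(e : config n | Wsum e == w) weight p e * Y e) / probW n p w.

(* Since X_i X_(i+1) = e_i e_(i+1) e_(i+2), the sum of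
   the neighbour correlations E(X_i X_j | W = w) equals 2 E[A; W = w] / P(W = w),
   where A counts the occupied triples (neighbour_sum_run3).  Two comparisons of
   adjacent levels of W, each obtained from an injective local move on marked
   configurations (sum_le_inj) landing in configurations marked at an edge,
   whose total mass is v P(W = v) (edge_mass), bound this quantity:
   1. Cutting the run through a marked triple at its last site lowers W by one
      and keeps the edge at the mark: (1 - p) E[A; W = w] <= p (w - 1) P(W = w - 1)
      (run3_deletion).
   2. Every site is charged to an edge or to an occurrence of one of the
      patterns 001, 0000, 1010 nearby (site_charge), so a configuration with
      10 W <= n has at least n / 6 occurrences (pattern_capacity); each
      occurrence can be completed to a new edge, at weight cost p, p^2 or 1,
      hence p^2 n P(W = v) <= 18 (v + 1) P(W = v + 1) (sparse_insertion).
   With v = w - 1 and 1 - p >= 1/2 this gives n p E[A; W = w] <= 36 w^2 P(W = w)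
   (chain_estimates), which is the theorem with c = 1/10 and C = 72. *)

From HB Require Import structures.
From mathcomp Require Import all_boot all_order all_algebra.
From mathcomp Require Import zify ring lra.
Set Implicit Arguments. Unset Strict Implicit. Unset Printing Implicit Defensive.
Import Order.TTheory GRing.Theory Num.Theory.
Local Open Scope ring_scope.

Definition shift n (i : 'I_n) (k : nat) : 'I_n := iter k (@ordS n) i.

Lemma shiftS n (i : 'I_n) k : shift i k.+1 = ordS (shift i k).
Proof. by []. Qed.

Lemma val_shift n (i : 'I_n) k : val (shift i k) = ((i + k) %% n)%N.
Proof.
elim: k => [|k IH]; first by rewrite addn0 modn_small.
by rewrite /shift iterS -/(shift i k) /= IH -addn1 modnDml addn1 addnS.
Qed.

Lemma shift_neq n (i : 'I_n) k1 k2 :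
  (k1 < n)%N -> (k2 < n)%N -> k1 != k2 -> shift i k1 != shift i k2.
Proof.
move=> lt1 lt2; apply: contra => /eqP/(congr1 val); rewrite !val_shift => /eqP.
by rewrite eqn_modDl !modn_small.
Qed.

Lemma ord_pred_shift n (i : 'I_n) : ord_pred i = shift i n.-1.
Proof.
by apply: val_inj; rewrite val_shift; case: n i => [[]|n] i //=; rewrite addnS.
Qed.

Section Neighbours.
Variables (n : nat) (z : 'I_n).
Hypothesis n_gt2 : (2 < n)%N.

Lemma ordS_neq : ordS z != z.
Proof. by apply: (@shift_neq _ z 1 0); lia. Qed.

Lemma ordSS_neq : ordS (ordS z) != z.
Proof. by apply: (@shift_neq _ z 2 0); lia. Qed.

Lemma ord_pred_neq : ord_pred z != z.
Proof. by rewrite ord_pred_shift; apply: (@shift_neq _ z _ 0); lia. Qed.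

Lemma ord_pred_ordS_neq : ord_pred z != ordS z.
Proof. by rewrite ord_pred_shift; apply: (@shift_neq _ z _ 1); lia. Qed.

End Neighbours.

Lemma sum_rot n (h : 'I_n -> 'I_n) (F : 'I_n -> nat) :
  injective h -> (\sum_(z < n) F (h z) = \sum_(z < n) F z)%N.
Proof. by move=> h_inj; rewrite [RHS](reindex_inj h_inj). Qed.

Section Configurations.
Variable n : nat.
Implicit Types (e : config n) (x y z : 'I_n).

Definition upd e x b : config n := [ffun y => if y == x then b else e y].

Lemma updE e x b y : upd e x b y = if y == x then b else e y.
Proof. by rewrite ffunE. Qed.

Lemma upd_eq e x b : upd e x b x = b.
Proof. by rewrite updE eqxx. Qed.

Lemma upd_neq e x b y : y != x -> upd e x b y = e y.
Proof. by move=> /negbTE yx; rewrite updE yx. Qed.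

Lemma upd_inj e1 e2 x b : e1 x = e2 x -> upd e1 x b = upd e2 x b -> e1 = e2.
Proof.
move=> ex /ffunP eq12; apply/ffunP => y; have := eq12 y; rewrite !updE.
by case: eqP => [->|].
Qed.

Definition edge e z : bool := e z && e (ordS z).

Definition nsites (S : config n -> 'I_n -> bool) e : nat :=
  (\sum_(z < n) (S e z : nat))%N.

Lemma Wsum_nsites e : Wsum e = nsites edge e.
Proof. by []. Qed.

Lemma Wsum_window e e' z : (2 < n)%N ->
  (forall y, y != z -> y != ordS z -> e' y = e y) ->
  (Wsum e' + (edge e (ord_pred z) + edge e z + edge e (ordS z))
   = Wsum e + (edge e' (ord_pred z) + edge e' z + edge e' (ordS z)))%N.
Proof.
move=> n_gt2 same.
have Pz := ord_pred_neq z n_gt2; have Sz := ordS_neq z n_gt2.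
have PSz := ord_pred_ordS_neq z n_gt2.
pose rest y := [&& y != z, y != ordS z & y != ord_pred z].
have split_sum f : (\sum_(y < n) f y =
    f z + f (ordS z) + f (ord_pred z) + \sum_(y < n | rest y) f y)%N.
  rewrite (bigD1 z) // (bigD1 (ordS z)) /=; last by rewrite Sz.
  rewrite (bigD1 (ord_pred z)) /=; last by rewrite Pz PSz.
  by rewrite !addnA; congr (_ + _)%N; apply: eq_bigl => y; rewrite /rest -!andbA.
rewrite /Wsum (split_sum (Xi e')) (split_sum (Xi e)).
have -> : (\sum_(y < n | rest y) Xi e' y = \sum_(y < n | rest y) Xi e y)%N.
  apply: eq_bigr => y /and3P[yz ySz yPz]; rewrite /Xi !same //.
  - by apply: contra yPz => /eqP <-; rewrite ordSK.
  - by rewrite (inj_eq (@ordS_inj n)).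
rewrite /Xi /edge.
lia.
Qed.

Lemma exists_empty e : (Wsum e < n)%N -> exists z, ~~ e z.
Proof.
case: (pickP (fun z => ~~ e z)) => [z ez _|full]; first by exists z.
have -> : Wsum e = n.
  rewrite /Wsum (eq_bigr (fun _ => 1%N)) ?sum1_card ?card_ord // => z _.
  by rewrite /Xi (negbFE (full z)) (negbFE (full (ordS z))).
by rewrite ltnn.
Qed.

Lemma Wsum_cut_end e x : (2 < n)%N ->
  e (ord_pred x) -> e x -> ~~ e (ordS x) -> (Wsum (upd e x false) + 1 = Wsum e)%N.
Proof.
move=> n_gt2 ePx ex eSx.
have uP : upd e x false (ord_pred x) = e (ord_pred x) by rewrite upd_neq ?ord_pred_neq.
have uS : upd e x false (ordS x) = e (ordS x) by rewrite upd_neq ?ordS_neq.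
have uSS : upd e x false (ordS (ordS x)) = e (ordS (ordS x)) by rewrite upd_neq ?ordSS_neq.
have := @Wsum_window e (upd e x false) x n_gt2 (fun y yx _ => upd_neq _ _ yx).
by rewrite /edge ord_predK upd_eq uP uS uSS ePx ex (negbTE eSx) /= !addn0.
Qed.

End Configurations.

Arguments edge {n} e z.

Lemma sum_le_inj (R : numDomainType) (X Y : finType) (P : pred X) (Q : pred Y)
    (phi : X -> Y) (F : X -> R) (G : Y -> R) :
  {in P &, injective phi} -> (forall x, P x -> Q (phi x) /\ F x <= G (phi x)) ->
  (forall y, 0 <= G y) ->
  \sum_(x | P x) F x <= \sum_(y | Q y) G y.
Proof.
move=> phi_inj phiPQ G_ge0.
apply: (@le_trans _ _ (\sum_(x | P x) G (phi x))).
  by apply: ler_sum => x /phiPQ[].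
rewrite -(big_imset _ phi_inj) /= [leRHS](bigID (mem (phi @: [pred x | P x]))) /=.
rewrite -[leLHS]addr0 lerD ?sumr_ge0 // le_eqVlt; apply/orP; left; apply/eqP.
apply: eq_bigl => y; case: (boolP (y \in _)) => [/imsetP[x Px ->]|]; last by rewrite andbF.
by rewrite andbT (phiPQ x Px).1.
Qed.

Section Weights.
Variables (R : realFieldType) (n : nat) (p : R).
Implicit Types (e : config n) (x : 'I_n) (v : nat).

Definition site_weight (b : bool) : R := if b then p else 1 - p.

Lemma weight_prod e : weight p e = \prod_(i < n) site_weight (e i).
Proof.
set A := [set i | e i].
have cardAC : (n - #|A| = #|~: A|)%N.
  by rewrite [RHS]cardsCs setCK card_ord.
rewrite /weight (bigID (fun i => e i)) /= cardAC -!prodr_const.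
congr (_ * _); apply: eq_big => [i|i]; rewrite ?inE //.
- by move=> ei; rewrite /site_weight ei.
- by move=> /negbTE ei; rewrite /site_weight ei.
Qed.

Lemma weight_upd e x b :
  weight p (upd e x b) * site_weight (e x) = weight p e * site_weight b.
Proof.
rewrite !weight_prod (bigD1 x) //= [in RHS](bigD1 x) //= upd_eq.
rewrite (eq_bigr (fun i => site_weight (e i))) => [|i ix]; last by rewrite upd_neq.
ring.
Qed.

Lemma sum_pairs (S : config n -> 'I_n -> bool) (G : config n -> R) v :
  \sum_(x : config n * 'I_n | (Wsum x.1 == v) && S x.1 x.2) G x.1
  = \sum_(e : config n | Wsum e == v) G e * (nsites S e)%:R.
Proof.
rewrite -(pair_big_dep (fun e => Wsum e == v) S (fun e _ => G e)) /=.
apply: eq_bigr => e _; rewrite /nsites natr_sum mulr_sumr big_mkcond /=.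
by apply: eq_bigr => z _; case: (S e z); rewrite ?mulr1 ?mulr0.
Qed.

Lemma edge_mass v :
  \sum_(x : config n * 'I_n | (Wsum x.1 == v) && edge x.1 x.2) weight p x.1
  = v%:R * probW n p v.
Proof.
rewrite sum_pairs /probW mulr_sumr; apply: eq_bigr => e /eqP <-.
by rewrite Wsum_nsites mulrC.
Qed.

Hypotheses (p_ge0 : 0 <= p) (p_le1 : p <= 1).

Lemma site_weight_ge0 b : 0 <= site_weight b.
Proof. by case: b; rewrite /site_weight ?subr_ge0. Qed.

Lemma weight_ge0 e : 0 <= weight p e.
Proof. by rewrite weight_prod prodr_ge0 // => i _; apply: site_weight_ge0. Qed.

End Weights.

Section RunDeletion.
Variable n : nat.
Implicit Types (e : config n) (i d : 'I_n).

Definition run3 e i : bool := [&& e i, e (ordS i) & e (ordS (ordS i))].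

Definition run_to e i d : bool :=
  [&& (2 <= d)%N, [forall k : 'I_n, (k <= d)%N ==> e (shift i k)]
    & ~~ e (shift i d.+1)].

Lemma run_to_occupied e i d (k : nat) : run_to e i d -> (k <= d)%N -> e (shift i k).
Proof.
case/and3P=> _ /forallP occ _ le_kd.
have lt_kn : (k < n)%N by apply: leq_ltn_trans le_kd (ltn_ord d).
by have := occ (Ordinal lt_kn); rewrite /= le_kd.
Qed.

Lemma run_to_exists e i : (exists z, ~~ e z) -> run3 e i -> exists d, run_to e i d.
Proof.
case=> z ez /and3P[e0 e1 e2].
have n_gt0 : (0 < n)%N by case: n i {e z ez e0 e1 e2} => [[]|].
pose kz := ((z + n - i) %% n)%N.
have shift_kz : shift i kz = z.
  apply: val_inj; rewrite val_shift /kz modnDmr.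
  have -> : (i + (z + n - i) = z + n)%N by have := ltn_ord i; lia.
  by rewrite modnDr modn_small.
have has_empty : exists k, ~~ e (shift i k) by exists kz; rewrite shift_kz.
case: (ex_minnP has_empty) => k0 ek0 k0_min.
have k0_lt_n : (k0 < n)%N.
  apply: leq_ltn_trans (k0_min kz _) _; first by rewrite shift_kz.
  exact: ltn_pmod.
have k0_gt2 : (2 < k0)%N.
  by case: k0 ek0 {k0_min k0_lt_n} => [|[|[|k0]]]; rewrite ?e0 ?e1 ?e2.
have d_lt_n : (k0.-1 < n)%N by lia.
exists (Ordinal d_lt_n); apply/and3P; split => /=; first by lia.
- apply/forallP => k; apply/implyP => le_kd.
  by apply/negPn/negP => /k0_min; lia.
- by rewrite -shiftS prednK //; lia.
Qed.

Definition cut_run (t : config n * 'I_n * 'I_n) : config n * 'I_n :=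
  (upd t.1.1 (shift t.1.2 t.2) false, t.1.2).

Hypothesis n_gt2 : (2 < n)%N.

Lemma cut_run_edge e i d : run_to e i d ->
  let e' := upd e (shift i d) false in (Wsum e' + 1 = Wsum e)%N /\ edge e' i.
Proof.
move=> run e'.
have d_ge2 : (2 <= d)%N by case/and3P: run.
have d_lt_n := ltn_ord d.
have Pd : ord_pred (shift i d) = shift i d.-1.
  by rewrite -[in LHS](@prednK d) ?shiftS ?ordSK //; lia.
split.
  apply: Wsum_cut_end => //; last by case/and3P: run.
    by rewrite Pd; apply: (run_to_occupied run); lia.
  exact: (run_to_occupied run).
have i_d : shift i 0 != shift i d by apply: shift_neq; lia.
have Si_d : shift i 1 != shift i d by apply: shift_neq; lia.
rewrite /edge /e' (upd_neq _ _ i_d) (upd_neq _ _ Si_d).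
by rewrite (run_to_occupied (k := 0) run) ?(run_to_occupied (k := 1) run) //; lia.
Qed.

(* Different runs yield different cuts: the cut site is the end of the run. *)
Lemma cut_run_inj t1 t2 : run_to t1.1.1 t1.1.2 t1.2 -> run_to t2.1.1 t2.1.2 t2.2 ->
  cut_run t1 = cut_run t2 -> t1 = t2.
Proof.
case: t1 t2 => [[e1 i] d1] [[e2 i'] d2] /= run1 run2 [cut12 eqi]; subst i'.
have shorter (f1 f2 : config n) (k1 k2 : 'I_n) : run_to f2 i k2 -> (k1 < k2)%N ->
    upd f1 (shift i k1) false <> upd f2 (shift i k2) false.
  move=> run lt12 /ffunP/(_ (shift i k1)).
  rewrite !ffunE eqxx (negbTE (shift_neq _ _ _ _)) ?(ltn_ord k1) ?(ltn_ord k2) ?ltn_eqF //.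
  by rewrite (run_to_occupied run) // ltnW.
case: (ltngtP d1 d2) => [lt12|lt21|/val_inj eq12].
- by case: (shorter _ _ _ _ run2 lt12 cut12).
- by case: (shorter _ _ _ _ run1 lt21 (esym cut12)).
- subst d2; congr (_, _, _); apply: upd_inj cut12.
  by rewrite (run_to_occupied run1) ?(run_to_occupied run2).
Qed.

End RunDeletion.

Arguments run3 {n} e i.

(* Stage one: (1 - p) E[#runs of three; W = w] <= p (w - 1) P(W = w - 1),
   by cutting the end of the run through each marked triple. *)
Lemma run3_deletion (R : realFieldType) (n : nat) (p : R) (w : nat) :
  (2 < n)%N -> 0 <= p -> p <= 1 -> (w < n)%N ->
  (1 - p) * \sum_(e : config n | Wsum e == w) weight p e * (nsites run3 e)%:R
  <= p * ((w.-1)%:R * probW n p w.-1).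
Proof.
move=> n_gt2 p_ge0 p_le1 w_lt_n.
pose marked (x : config n * 'I_n) := (Wsum x.1 == w) && run3 x.1 x.2.
pose P (t : config n * 'I_n * 'I_n) := marked t.1 && run_to t.1.1 t.1.2 t.2.
have runs : \sum_(e : config n | Wsum e == w) weight p e * (nsites run3 e)%:R
    <= \sum_(x | marked x) \sum_(d | run_to x.1 x.2 d) weight p x.1.
  rewrite -sum_pairs; apply: ler_sum => -[e i] /andP[/eqP We r3] /=.
  have empty : exists z, ~~ e z by apply: exists_empty; rewrite We.
  have [d run] := run_to_exists empty r3.
  rewrite (bigD1 d) //= -[leLHS]addr0 lerD // sumr_ge0 // => ? _.
  exact: weight_ge0.
rewrite pair_big_dep /= in runs.
apply: le_trans (ler_wpM2l _ runs) _; first by rewrite subr_ge0.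
rewrite mulr_sumr -edge_mass mulr_sumr.
apply: (sum_le_inj (P := P) (phi := @cut_run n)) => [t1 t2|[[e i] d]|y].
- by move=> /andP[_ run1] /andP[_ run2]; apply: cut_run_inj.
- case/andP=> /andP[/= /eqP We _] run; have [Wcut ecut] := cut_run_edge n_gt2 run.
  split; first by apply/andP; split => //; apply/eqP; lia.
  have := weight_upd p e (shift i d) false.
  rewrite (run_to_occupied (k := d) run) // /site_weight => wcut.
  by rewrite [leLHS]mulrC -wcut mulrC.
- by rewrite mulr_ge0 ?weight_ge0.
Qed.

Section Patterns.
Variable n : nat.
Implicit Types (e : config n) (z : 'I_n).

Definition pat001 e z : bool := [&& ~~ e (ord_pred z), ~~ e z & e (ordS z)].
Definition pat0000 e z : bool :=
  [&& ~~ e (ord_pred z), ~~ e z, ~~ e (ordS z) & ~~ e (ordS (ordS z))].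
Definition pat1010 e z : bool :=
  [&& e (ord_pred z), ~~ e z, e (ordS z) & ~~ e (ordS (ordS z))].

Lemma site_charge e z :
  (1 <= edge e z + edge e (ord_pred z) + edge e (ord_pred (ord_pred z))
       + pat001 e (ord_pred (ord_pred z)) + pat001 e (ord_pred z) + pat001 e z
       + pat001 e (ordS z) + pat1010 e (ord_pred (ord_pred z))
       + pat1010 e (ord_pred z) + pat0000 e z)%N.
Proof.
rewrite /edge /pat001 /pat1010 /pat0000 !ord_predK ordSK.
case: (e (ord_pred (ord_pred (ord_pred z)))); case: (e (ord_pred (ord_pred z)));
  case: (e (ord_pred z)); case: (e z); case: (e (ordS z)); by case: (e (ordS (ordS z))).
Qed.

Lemma pattern_capacity e :
  (n <= 3 * Wsum e + 4 * nsites pat001 e + 2 * nsites pat1010 e + nsites pat0000 e)%N.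
Proof.
have pred2_inj : injective (fun z : 'I_n => ord_pred (ord_pred z)).
  exact: inj_comp (@ord_pred_inj n) (@ord_pred_inj n).
have rot (S : config n -> 'I_n -> bool) h :
    injective h -> (\sum_(z < n) (S e (h z) : nat) = nsites S e)%N.
  by move=> h_inj; apply: (sum_rot (fun z => S e z : nat)).
have := leq_sum (index_enum 'I_n) (P := xpredT) (fun z _ => site_charge e z).
rewrite sum1_card card_ord !big_split /=.
rewrite (rot edge _ pred2_inj) (rot edge _ (@ord_pred_inj n)).
rewrite (rot pat001 _ pred2_inj) (rot pat001 _ (@ord_pred_inj n)) (rot pat001 _ (@ordS_inj n)).
rewrite (rot pat1010 _ pred2_inj) (rot pat1010 _ (@ord_pred_inj n)).
rewrite -[(\sum_(i < n) edge e i)%N]/(nsites edge e) -Wsum_nsites.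
rewrite -[(\sum_(i < n) pat001 e i)%N]/(nsites pat001 e).
rewrite -[(\sum_(i < n) pat0000 e i)%N]/(nsites pat0000 e).
lia.
Qed.

End Patterns.

Arguments pat001 {n} e z.
Arguments pat0000 {n} e z.
Arguments pat1010 {n} e z.

Section Insertion.
Variable n : nat.
Hypothesis n_gt2 : (2 < n)%N.
Implicit Types (e : config n) (y z : 'I_n).

Definition set2 e z b c : config n := upd (upd e z b) (ordS z) c.

Lemma set2_far e z b c y : y != z -> y != ordS z -> set2 e z b c y = e y.
Proof. by move=> yz ySz; rewrite /set2 !upd_neq. Qed.

Lemma set2_at e z b c : set2 e z b c z = b.
Proof. by rewrite /set2 upd_neq ?upd_eq // eq_sym ordS_neq. Qed.

Lemma set2_next e z b c : set2 e z b c (ordS z) = c.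
Proof. exact: upd_eq. Qed.

Lemma set2_inj e1 e2 z b c : e1 z = e2 z -> e1 (ordS z) = e2 (ordS z) ->
  set2 e1 z b c = set2 e2 z b c -> e1 = e2.
Proof.
move=> e12z e12Sz /upd_inj eq12; apply: upd_inj e12z (eq12 _).
by rewrite !upd_neq ?ordS_neq.
Qed.

Lemma Wsum_set2 e z b c :
  (Wsum (set2 e z b c) + (edge e (ord_pred z) + edge e z + edge e (ordS z))
   = Wsum e + ((e (ord_pred z) && b) + (b && c) + (c && e (ordS (ordS z)))))%N.
Proof.
have := Wsum_window n_gt2 (@set2_far e z b c).
have far_pred : set2 e z b c (ord_pred z) = e (ord_pred z).
  by rewrite set2_far ?ord_pred_neq ?ord_pred_ordS_neq.
have far_SS : set2 e z b c (ordS (ordS z)) = e (ordS (ordS z)).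
  by rewrite set2_far ?ordSS_neq // (inj_eq (@ordS_inj n)) ordS_neq.
by rewrite {4 5 6}/edge ord_predK far_pred far_SS set2_at set2_next.
Qed.

Lemma weight_set2 (R : realFieldType) (p : R) e z b c :
  weight p (set2 e z b c) * site_weight p (e z) * site_weight p (e (ordS z))
  = weight p e * site_weight p b * site_weight p c.
Proof.
have w1 := weight_upd p (upd e z b) (ordS z) c.
rewrite upd_neq ?ordS_neq // in w1.
by rewrite /set2 [LHS]mulrAC w1 mulrAC weight_upd.
Qed.

(* Insertion moves, each creating one new edge at the marked site:
   0 0 1 -> 0 1 1 and 0 0 0 0 -> 0 1 1 0 fill sites z and z+1,
   1 0 1 0 -> 1 1 0 0 slides the particle at z+1 to z. *)
Definition fill (x : config n * 'I_n) := (set2 x.1 x.2 true true, x.2).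
Definition slide (x : config n * 'I_n) := (set2 x.1 x.2 true false, ord_pred x.2).

End Insertion.

Section PatternInsertion.
Variables (R : realFieldType) (n : nat) (p : R).
Hypotheses (n_gt2 : (2 < n)%N) (p_gt0 : 0 < p) (p_lt1 : p < 1).
Implicit Types (e : config n) (z : 'I_n) (v : nat).

Let p_ge0 : 0 <= p. Proof. exact: ltW. Qed.
Let p_le1 : p <= 1. Proof. exact: ltW. Qed.
Let q_gt0 : 0 < 1 - p. Proof. by rewrite subr_gt0. Qed.
Let q_le1 : 1 - p <= 1. Proof. by rewrite lerBlDr lerDl. Qed.

Lemma insertion_bound (S : config n -> 'I_n -> bool)
    (phi : config n * 'I_n -> config n * 'I_n) (c : R) v :
  (forall x1 x2, S x1.1 x1.2 -> S x2.1 x2.2 -> phi x1 = phi x2 -> x1 = x2) ->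
  (forall x, S x.1 x.2 -> [/\ Wsum (phi x).1 = (Wsum x.1).+1,
       edge (phi x).1 (phi x).2 & c * weight p x.1 <= weight p (phi x).1]) ->
  c * \sum_(e : config n | Wsum e == v) weight p e * (nsites S e)%:R
  <= v.+1%:R * probW n p v.+1.
Proof.
move=> phi_inj phi_spec; rewrite -sum_pairs -edge_mass mulr_sumr.
apply: (sum_le_inj (phi := phi)) => [x1 x2 /andP[_ S1] /andP[_ S2]|x /andP[/eqP Wx Sx]|y].
- exact: phi_inj.
- by have [W' E' le'] := phi_spec x Sx; rewrite W' Wx eqxx E'.
- exact: weight_ge0.
Qed.

(* Filling 0 0 1 to 0 1 1 gains one site: weight factor p / (1 - p) >= p. *)
Lemma pat001_bound v :
  p * \sum_(e : config n | Wsum e == v) weight p e * (nsites pat001 e)%:R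
  <= v.+1%:R * probW n p v.+1.
Proof.
apply: (insertion_bound (phi := @fill n)) => [[e1 z1] [e2 z2]|[e z]] /=.
  move=> /and3P[_ e1z e1S] /and3P[_ e2z e2S] [eq12 z12]; subst z2; congr (_, _).
  by apply: (set2_inj n_gt2 _ _ eq12); rewrite ?e1S ?e2S // (negbTE e1z) (negbTE e2z).
case/and3P=> ePz ez eSz; split.
- have := Wsum_set2 n_gt2 e z true true.
  by rewrite /edge (negbTE ePz) (negbTE ez) eSz /=; lia.
- by rewrite /edge set2_at ?set2_next.
have := weight_set2 n_gt2 p e z true true; rewrite (negbTE ez) eSz /site_weight.
move/(mulIf (lt0r_neq0 p_gt0)) => wfill.
by rewrite mulrC -wfill ler_piMr ?weight_ge0 ?q_le1.
Qed.

(* Filling 0 0 0 0 to 0 1 1 0 gains two sites: weight factor >= p^2. *)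
Lemma pat0000_bound v :
  p ^+ 2 * \sum_(e : config n | Wsum e == v) weight p e * (nsites pat0000 e)%:R
  <= v.+1%:R * probW n p v.+1.
Proof.
apply: (insertion_bound (phi := @fill n)) => [[e1 z1] [e2 z2]|[e z]] /=.
  move=> /and4P[_ e1z e1S _] /and4P[_ e2z e2S _] [eq12 z12]; subst z2; congr (_, _).
  apply: (set2_inj n_gt2 _ _ eq12).
    by rewrite (negbTE e1z) (negbTE e2z).
  by rewrite (negbTE e1S) (negbTE e2S).
case/and4P=> ePz ez eSz eSSz; split.
- have := Wsum_set2 n_gt2 e z true true.
  by rewrite /edge (negbTE ePz) (negbTE ez) (negbTE eSz) (negbTE eSSz) /=; lia.
- by rewrite /edge set2_at ?set2_next.
have := weight_set2 n_gt2 p e z true true.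
rewrite (negbTE ez) (negbTE eSz) /site_weight => wfill.
have {}wfill : weight p (set2 e z true true) * (1 - p) ^+ 2 = weight p e * p ^+ 2.
  by rewrite !expr2 !mulrA.
by rewrite mulrC -wfill ler_piMr ?weight_ge0 // exprn_ile1 // ltW.
Qed.

(* Sliding 1 0 1 0 to 1 1 0 0 keeps the number of particles and the weight. *)
Lemma pat1010_bound v :
  \sum_(e : config n | Wsum e == v) weight p e * (nsites pat1010 e)%:R
  <= v.+1%:R * probW n p v.+1.
Proof.
rewrite -[leLHS]mul1r.
apply: (insertion_bound (phi := @slide n)) => [[e1 z1] [e2 z2]|[e z]] /=.
  move=> /and4P[_ e1z e1S _] /and4P[_ e2z e2S _] /(congr1 (fun x => (x.1, ordS x.2))).
  rewrite /= !ord_predK => -[eq12 z12]; subst z2; congr (_, _).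
  by apply: (set2_inj n_gt2 _ _ eq12); rewrite ?e1S ?e2S // (negbTE e1z) (negbTE e2z).
case/and4P=> ePz ez eSz eSSz; split.
- have := Wsum_set2 n_gt2 e z true false.
  by rewrite /edge ord_predK ePz (negbTE ez) eSz (negbTE eSSz) /=; lia.
- by rewrite /edge ord_predK (set2_at n_gt2) set2_far ?ord_pred_neq ?ord_pred_ordS_neq ?ePz.
have := weight_set2 n_gt2 p e z true false; rewrite (negbTE ez) eSz /site_weight.
rewrite [RHS]mulrAC => /(mulIf (lt0r_neq0 p_gt0))/(mulIf (lt0r_neq0 q_gt0)) ->.
by rewrite mul1r.
Qed.

(* Stage two: when edges are sparse, a configuration with W = v offers
   order n insertion sites, so p^2 n P(W = v) <= 18 (v + 1) P(W = v + 1). *)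
Lemma sparse_insertion v : (10 * v <= n)%N ->
  p ^+ 2 * n%:R * probW n p v <= 18 * (v.+1%:R * probW n p v.+1).
Proof.
move=> sparse.
pose mass (S : config n -> 'I_n -> bool) :=
  \sum_(e : config n | Wsum e == v) weight p e * (nsites S e)%:R.
have pp_le_p : p ^+ 2 <= p by rewrite expr2 ler_piMl.
have pp_le1 : p ^+ 2 <= 1 by rewrite exprn_ile1.
have per_config : p ^+ 2 * n%:R * probW n p v
    <= 6 * (p * mass pat001 + mass pat1010 + p ^+ 2 * mass pat0000).
  rewrite /probW /mass !mulr_sumr -!big_split mulr_sumr /=.
  apply: ler_sum => e /eqP We.
  have many : (n <= 6 * (nsites pat001 e + nsites pat1010 e + nsites pat0000 e))%N.
    by have := pattern_capacity e; rewrite We; lia.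
  move: (nsites pat001 e) (nsites pat1010 e) (nsites pat0000 e) many => a b c many.
  have w_ge0 := weight_ge0 p_ge0 p_le1 e.
  have n_le : (n%:R : R) <= 6 * (a%:R + b%:R + c%:R) by rewrite -!natrD -natrM ler_nat.
  move: (weight p e) w_ge0 => W W_ge0.
  apply: (@le_trans _ _ (p ^+ 2 * W * (6 * (a%:R + b%:R + c%:R)))).
    by rewrite [leLHS]mulrAC ler_wpM2l // mulr_ge0 ?exprn_ge0.
  rewrite -subr_ge0.
  have -> : 6 * (p * (W * a%:R) + W * b%:R + p ^+ 2 * (W * c%:R))
      - p ^+ 2 * W * (6 * (a%:R + b%:R + c%:R))
      = 6 * W * ((p - p ^+ 2) * a%:R + (1 - p ^+ 2) * b%:R) by ring.
  by rewrite !mulr_ge0 ?addr_ge0 ?mulr_ge0 ?subr_ge0.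
apply: (le_trans per_config).
set X := v.+1%:R * probW n p v.+1.
have -> : 18 * X = 6 * (X + X + X) by ring.
rewrite ler_wpM2l //.
exact: lerD (lerD (pat001_bound v) (pat1010_bound v)) (pat0000_bound v).
Qed.

End PatternInsertion.

Lemma Xi_next_run3 n (e : config n) i : (Xi e i * Xi e (ordS i))%N = run3 e i.
Proof. by rewrite /Xi /run3; case: (e i); case: (e (ordS i)); case: (e _). Qed.

(* The left-hand side of the theorem equals 2 E[#runs of three; W = w] / P(W = w):
   both neighbour sums count each occupied triple once. *)
Lemma neighbour_sum_run3 (R : realFieldType) n (p : R) w :
  \sum_(i < n)
     (condE p (fun e => (Xi e i * Xi e (ord_pred i))%:R) w
    + condE p (fun e => (Xi e i * Xi e (ordS i))%:R) w)
  = 2 * (\sum_(e : config n | Wsum e == w) weight p e * (nsites run3 e)%:R) / probW n p w.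
Proof.
rewrite /condE big_split /= -!mulr_suml -mulrDl; congr (_ / _).
rewrite [X in X + _]exchange_big [X in _ + X]exchange_big /= -big_split mulr_sumr /=.
apply: eq_bigr => e _; rewrite -!mulr_sumr -mulrDr -!natr_sum.
have pred_sum : (\sum_(i < n) Xi e i * Xi e (ord_pred i) = nsites run3 e)%N.
  rewrite -(sum_rot _ (@ordS_inj n)) /nsites; apply: eq_bigr => i _.
  by rewrite ordSK mulnC Xi_next_run3.
have next_sum : (\sum_(i < n) Xi e i * Xi e (ordS i) = nsites run3 e)%N.
  by apply: eq_bigr => i _; rewrite Xi_next_run3.
by rewrite pred_sum next_sum mulrCA -natrD addnn -mul2n natrM.
Qed.

(* Chaining the two estimates: with s = E[A; W = w], q = P(W = w - 1),
   N = P(W = w) and m = n, the cut and insertion bounds give the theorem. *)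
Lemma chain_estimates (R : realFieldType) (p m s q N : R) (w : nat) :
  0 < p -> p < 1 / 2 -> 0 < m -> 0 < N -> 0 <= s -> 0 <= q ->
  (1 - p) * s <= p * (w.-1%:R * q) -> p ^+ 2 * m * q <= 18 * (w%:R * N) ->
  2 * s / N <= 72 / (m * p) * w%:R ^+ 2.
Proof.
move=> p_gt0 p_lt_half m_gt0 N_gt0 s_ge0 q_ge0 cut insert.
have mp_gt0 : 0 < m * p by rewrite mulr_gt0.
have s_le : s <= 2 * p * (w%:R * q).
  have w1_le : w.-1%:R * q <= w%:R * q by rewrite ler_wpM2r // ler_nat leq_pred.
  nra.
have key : s * (m * p) <= 36 * (w%:R ^+ 2 * N).
  apply: le_trans (ler_wpM2r (ltW mp_gt0) s_le) _.
  have := ler_wpM2l (_ : 0 <= 2 * w%:R) insert.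
  rewrite (_ : 2 * p * _ * _ = 2 * w%:R * (p ^+ 2 * m * q)); last by ring.
  by rewrite (_ : 36 * _ = 2 * w%:R * (18 * (w%:R * N))); [apply; rewrite mulr_ge0 | ring].
rewrite ler_pdivrMr // (_ : _ * _ * N = 72 * (w%:R ^+ 2 * N) / (m * p)); last by ring.
rewrite ler_pdivlMr //; lra.
Qed.

Theorem mainTheorem6 :
  exists c C : rat, 0 < c /\ 0 < C /\
  forall (R : realFieldType) (n : nat) (p : R) (w : nat),
    (10 < n)%N -> 0 < p -> p < 1 / 2 ->
    (0 < w)%N -> w%:R <= ratr c * n%:R * p ->
    0 < probW n p w ->
    \sum_(i < n)
       (condE p (fun e => (Xi e i * Xi e (ord_pred i))%:R) w
      + condE p (fun e => (Xi e i * Xi e (ordS i))%:R) w)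
    <= ratr C / (n%:R * p) * w%:R ^+ 2.
Proof.
exists (10%:R)^-1, 72%:R; split; first by rewrite invr_gt0 ltr0n.
split; first by rewrite ltr0n.
move=> R n p w n_gt10 p_gt0 p_lt_half w_gt0 w_small PW_gt0.
rewrite fmorphV /= !ratr_nat in w_small *.
have p_lt1 : p < 1 by lra.
have n_gt2 : (2 < n)%N by lia.
have sparse : (10 * w <= n)%N.
  have n_ge0 : (0 : R) <= n%:R by [].
  by rewrite -(ler_nat R) natrM; nra.
have w_ge0 := weight_ge0 (ltW p_gt0) (ltW p_lt1).
rewrite neighbour_sum_run3; apply: (chain_estimates (q := probW n p w.-1)) => //.
- by rewrite ltr0n; lia.
- by rewrite sumr_ge0 // => e _; rewrite mulr_ge0.
- by rewrite sumr_ge0.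
- by apply: run3_deletion; rewrite ?ltW //; lia.
- have sparse' : (10 * w.-1 <= n)%N by lia.
  by have := sparse_insertion n_gt2 p_gt0 p_lt1 sparse'; rewrite prednK.
Qed.
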